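(* Let $\mathcal E\subset\mathcal V$ be finite, let $\mathcal R_0=\mathcal E\cup-\mathcal S(L)$, $\mathcal R_{i+1}=\{v\in\mathcal V:\pi(\Psi(v))\cap\mathcal R_i\neq\emptyset\}$ for $i\geq0$, and $\mathcal R=\bigcup_{i\ge0}\mathcal R_i$. Let $H\in\mathbb Z_{\geq0}$ be such that $d\ell^H\mathcal E\subset\mathbb Z$ and let $N\in\mathbb Q_{\geq0}$ be such that $\mathcal E\cup-\mathcal S(L)\subset\mathbb Q_{\leq N}$. Put $c=\left\lfloor(n+1)\frac{N+\mu_\kappa}{\tau}\right\rfloor+H$. Then $\mathcal R_i=\mathcal R$ for every integer $i\geq c$.
   Context: Let $\mathbf K$ be a field and $\ell\geq 2$ an integer. Let $L=a_n\phi_\ell^n+\dots+a_0$ with $n\geq1$, $a_i\in\mathbf K[z]$, $a_0a_n\neq0$, where $\phi_\ell(f)(z)=f(z^\ell)$ acting on Hahn series with coefficients in $\mathbf K$ and value group $\mathbb Q$. Let $\mathcal P(L)=\{(\ell^i,j): 0\le i\le n,\ j\in\operatorname{supp} a_i\}$. The Newton polygon of $L$ is the convex hull of $\{(\ell^i,j): 0\le i\le n,\ j\geq\operatorname{val} a_i\}\subset\mathbb R^2$; its non-vertical edges have slopes $\mu_1<\dots<\mu_\kappa$, $\mathcal S(L)=\{\mu_1,\dots,\mu_\kappa\}$. Let $d\geq1$ be a common multiple of the denominators of the $\mu_k$. Define $\Psi(v)=\{v\ell^i+j:(\ell^i,j)\in\mathcal P(L)\}$, $\pi(q)=\max\{(q-j)/\ell^i:(\ell^i,j)\in\mathcal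 P(L)\}$. Let $\mathcal V_0=-\mathcal S(L)$, $\mathcal V_{i+1}=\bigcup_{v\in\mathcal V_i}\pi(\Psi(v))$, $\mathcal V=\bigcup_{i\ge0}\mathcal V_i$ (a well-ordered subset of $\bigcup_{i\ge0}\frac1{d\ell^i}\mathbb Z$). For $v\in\mathbb Q$ let $\epsilon(v)=\min\{w\in\mathcal V: w>v\}-v\in\mathbb Q_{>0}\cup\{+\infty\}$ ($+\infty$ if this set is empty), and $\tau=\min\{\epsilon(-\mu_1),\dots,\epsilon(-\mu_\kappa),(d\ell^n)^{-1}\}\in\mathbb Q_{>0}$. *)

From HB Require Import structures.
From mathcomp Require Import all_boot all_order all_algebra.
Set Implicit Arguments. Unset Strict Implicit. Unset Printing Implicit Defensive.
Import Order.TTheory GRing.Theory Num.Theory.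
Local Open Scope ring_scope.

Section Mahler.
(* The operator L = a_n phi_l^n + ... + a_0 : only a 0, ..., a n are used. *)
Variables (K : fieldType) (l n : nat) (a : nat -> {poly K}).

Definition lpow (i : nat) : rat := (l ^ i)%N%:R.

Definition valp (p : {poly K}) : nat := find (fun c => c != 0) p.

(* P(L) = {(l^i, j) : 0 <= i <= n, j in supp a_i}, encoded by pairs (i, j) *)
Definition PL : seq (nat * nat) :=
  [seq (i, j) | i <- iota 0 n.+1,
                j <- [seq j <- iota 0 (size (a i)) | (a i)`_j != 0]].

(* indices i with a_i <> 0: their lowest points (l^i, val a_i) *)
Definition idxL : seq nat := [seq i <- iota 0 n.+1 | a i != 0].

Definition slope_of (i i' : nat) : rat :=
  ((valp (a i'))%:R - (valp (a i))%:R) / (lpow i' - lpow i).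

(* the line of slope mu through (l^i, val a_i) supports the Newton polygon
   from below *)
Definition supports (mu : rat) (i : nat) : bool :=
  all (fun k => (valp (a i))%:R - mu * lpow i <= (valp (a k))%:R - mu * lpow k)
      idxL.

(* S(L): slopes of the non-vertical edges of the Newton polygon, i.e. the
   slopes of the lines through two distinct vertices that support the
   (upward-closed) Newton polygon from below. *)
Definition slopesL : seq rat :=
  undup [seq slope_of i i' | i <- idxL, i' <- [seq i' <- idxL | (i < i')%N & supports (slope_of i i') i]].

Definition mu_max : rat := foldr Num.max (head 0 slopesL) slopesL.

Definition Psi (v : rat) : seq rat := [seq v * lpow p.1 + (p.2)%:R | p <- PL].

Definition pi_val (q : rat) (p : nat * nat) : rat := (q - (p.2)%:R) / lpow p.1.

Definition piL (q : rat) : rat :=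
  foldr Num.max (pi_val q (head (0%N, 0%N) PL)) [seq pi_val q p | p <- PL].

Fixpoint Vi (k : nat) : seq rat :=
  match k with
  | 0 => [seq - mu | mu <- slopesL]
  | k'.+1 => undup (flatten [seq [seq piL q | q <- Psi v] | v <- Vi k'])
  end.

Definition inV (w : rat) : Prop := exists k, w \in Vi k.

Definition is_min (S : rat -> Prop) (m : rat) : Prop :=
  S m /\ forall x, S x -> m <= x.

(* eps(v) = e (finite case): e = min {w in V : w > v} - v.
   (eps(v) = +oo when no such w exists; then no e satisfies is_eps v e.) *)
Definition is_eps (v e : rat) : Prop :=
  is_min (fun x => exists w, inV w /\ v < w /\ x = w - v) e.

Definition is_tau (d : nat) (tau : rat) : Prop :=
  is_min (fun x => x = ((d * l ^ n)%N%:R)^-1 \/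
                   exists2 mu, mu \in slopesL & is_eps (- mu) x) tau.

Fixpoint Ri (E : seq rat) (k : nat) (v : rat) : Prop :=
  match k with
  | 0 => v \in E \/ - v \in slopesL
  | k'.+1 => inV v /\ exists2 q, q \in Psi v & Ri E k' (piL q)
  end.

Definition inR (E : seq rat) (v : rat) : Prop := exists k, Ri E k v.

End Mahler.

From Pilot Require Import Defs.
From HB Require Import structures.
From mathcomp Require Import all_boot all_order all_algebra.
From mathcomp Require Import ring lra zify.
From Stdlib Require Import Classical ClassicalEpsilon Wf_nat.
Set Implicit Arguments. Unset Strict Implicit. Unset Printing Implicit Defensive.
Import Order.TTheory GRing.Theory Num.Theory.
Local Open Scope ring_scope.

(* Let v be in R_k, reached through v = v_0 <= v_1 <= ... <= v_k in E u -S(L) with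
   v_(t+1) = pi(q_t), q_t in Psi(v_t); repeated terms can be skipped.  pi(q) is
   where the lower envelope of the lines x |-> x l^i + j, (i, j) in P(L), reaches
   height q, and the breakpoints of that envelope are the points -mu, mu in S(L).
   A step shorter than tau <= eps(-mu) therefore crosses no breakpoint, the same
   line is lowest at both ends, and this forces d l^(s-1) v_t in Z whenever
   d l^s v_(t+1) in Z.  A longer step costs at most a factor l^n in the
   denominator, and since the chain stays in [-mu_kappa, N] there are at most
   (N + mu_kappa)/tau of them.  Starting from d l^H v_k in Z, the short steps are
   thus at most H + n (number of long steps), so v is in R_c.
   That eps(-mu) is attained needs V to be well ordered: V is the closure of a
   finite set under finitely many monotone inflationary maps y |-> pi(y l^i + j),
   and such a closure is well ordered by a minimal-bad-sequence argument. *)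

Lemma le_foldr_max (R : realDomainType) (x0 x : R) (s : seq R) :
  x \in s -> x <= foldr Num.max x0 s.
Proof.
elim: s => [//|y s IH]; rewrite inE /= le_max => /orP [/eqP ->|/IH ->].
  by rewrite lexx.
by rewrite orbT.
Qed.

Lemma foldr_max_in (R : realDomainType) (x0 : R) (s : seq R) :
  foldr Num.max x0 s \in x0 :: s.
Proof.
elim: s => [|y s IH] /=; first exact: mem_head.
case: leP => _; last by rewrite !inE eqxx orbT.
by move: IH; rewrite !inE => /orP [->|->]; rewrite ?orbT.
Qed.

Lemma ex_argmin_seq (T : eqType) (R : realDomainType) (s : seq T) (g : T -> R) :
  s != [::] -> exists2 x, x \in s & forall y, y \in s -> g x <= g y.
Proof.
elim: s => [//|x s IH] _; case: (eqVneq s [::]) => [->|/IH [z zs hz]].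
  by exists x => [|y]; rewrite ?inE // => /eqP ->.
have [hxz|hzx] := leP (g x) (g z).
  exists x => [|y]; rewrite ?inE ?eqxx // => /orP [/eqP ->//|/hz].
  exact: le_trans.
exists z => [|y]; rewrite inE ?zs ?orbT // => /orP [/eqP ->|/hz //].
exact: ltW.
Qed.

Lemma invr_le_int (R : archiRealFieldType) (x M : R) :
  0 < M -> x * M \is a Num.int -> 0 < x -> M^-1 <= x.
Proof.
move=> M_gt0 xM_int x_gt0; have xM_gt0 := mulr_gt0 x_gt0 M_gt0.
have := norm_intr_ge1 xM_int (lt0r_neq0 xM_gt0).
rewrite ger0_norm ?(ltW xM_gt0) // => ge1.
by rewrite -div1r ler_pdivrMr.
Qed.

Lemma ex_minn_prop (P : nat -> Prop) :
  (exists k, P k) -> exists k, P k /\ forall m, P m -> (k <= m)%N.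
Proof.
move=> ex_P; have [k [[Pk k_min] _]] :=
  dec_inh_nat_subset_has_unique_least_element P (fun k => classic (P k)) ex_P.
by exists k; split => // m /k_min /ssrnat.leP.
Qed.

Lemma infinite_pigeonhole (C : eqType) (s : seq C) (Q : nat -> C -> Prop) :
  (forall k, exists2 c, c \in s & Q k c) ->
  exists2 c, c \in s & forall m, exists2 k, (m <= k)%N & Q k c.
Proof.
elim: s Q => [|c s IH] Q Q_cover; first by have [] := Q_cover 0%N.
have [c_inf|/not_all_ex_not [m c_fin]] :=
  classic (forall m, exists2 k, (m <= k)%N & Q k c).
  by exists c; rewrite ?mem_head.
have Q_cover' : forall k, exists2 c', c' \in s & Q (m + k)%N c'.
  move=> k; have [c'] := Q_cover (m + k)%N; rewrite inE => /orP [/eqP -> Qc|].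
    by case: c_fin; exists (m + k)%N; rewrite ?leq_addr.
  by exists c'.
have [c' c's c'_inf] := IH _ Q_cover'; exists c'; first by rewrite inE c's orbT.
move=> m'; have [k le_m'k Qk] := c'_inf m'.
by exists (m + k)%N; rewrite ?(leq_trans le_m'k) ?leq_addl.
Qed.

Section LowerEnvelope.
Variables (R : realFieldType) (T : eqType) (s : seq T) (slope icpt : T -> R).

Definition line (b : T) (t : R) : R := t * slope b + icpt b.

Definition lowest (a : T) (t : R) : Prop :=
  forall b, b \in s -> line a t <= line b t.

Definition breakpoint (t : R) : Prop :=
  exists a b, [/\ a \in s, b \in s, slope a != slope b, lowest a t & lowest b t].

Lemma line_subE a b t t' :
  line b t' - line a t' = line b t - line a t + (t' - t) * (slope b - slope a).
Proof. rewrite /line; ring. Qed.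

Definition cross (a b : T) : R := (icpt a - icpt b) / (slope b - slope a).

Lemma line_sub_crossE a b t : slope b != slope a ->
  line b t - line a t = (t - cross a b) * (slope b - slope a).
Proof.
by rewrite -subr_eq0 => ne_ba; rewrite /line /cross; field.
Qed.

Lemma line_lt_cross a b t : slope b < slope a ->
  (line b t < line a t) = (cross a b < t).
Proof.
move=> lt_ba; rewrite -subr_lt0 line_sub_crossE ?lt_eqF //.
by rewrite nmulr_llt0 ?subr_lt0 // subr_gt0.
Qed.

Lemma lowest_breakpoint_right a x y : a \in s -> lowest a x -> ~ lowest a y ->
  x < y -> exists c, [/\ x <= c, c < y & breakpoint c].
Proof.
move=> a_s a_x a_y lt_xy.
have slope_below b : b \in s -> line b y < line a y -> slope b < slope a.
  move=> b_s lt_by; rewrite ltNge; apply/negP => le_ab.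
  have := line_subE a b x y; have := a_x b b_s.
  have : 0 <= (y - x) * (slope b - slope a) by apply: mulr_ge0; rewrite subr_ge0 // ltW.
  by move: lt_by; lra.
pose S := [seq b <- s | line b y < line a y].
have S_nil : S != [::].
  apply/eqP => S0; apply: a_y => b b_s; rewrite leNgt; apply/negP => lt_ba.
  have : b \in S by rewrite mem_filter lt_ba b_s.
  by rewrite S0.
have [b b_S b_min] := ex_argmin_seq (cross a) S_nil.
move: b_S; rewrite mem_filter => /andP [lt_by b_s].
have lt_ba := slope_below b b_s lt_by.
have lt_cy : cross a b < y by rewrite -line_lt_cross.
have le_xc : x <= cross a b by rewrite leNgt -line_lt_cross // -leNgt a_x.
have a_c : lowest a (cross a b).
  move=> r r_s; have [le_ar|lt_ra] := leP (slope a) (slope r).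
    have := line_subE a r x (cross a b); have := a_x r r_s.
    have : 0 <= (cross a b - x) * (slope r - slope a) by apply: mulr_ge0; rewrite subr_ge0.
    lra.
  rewrite leNgt line_lt_cross //; apply/negP => lt_rc.
  have r_S : r \in S by rewrite mem_filter r_s line_lt_cross // (lt_trans lt_rc).
  by have := b_min r r_S; rewrite leNgt lt_rc.
exists (cross a b); split => //; exists a, b; split => //; first by rewrite gt_eqF.
move=> r r_s; have := line_sub_crossE (cross a b) (negbT (lt_eqF lt_ba)).
rewrite subrr mul0r => /eqP; rewrite subr_eq0 => /eqP ->; exact: a_c.
Qed.

End LowerEnvelope.

Lemma lowest_breakpoint_left (R : realFieldType) (T : eqType) (s : seq T)
    (slope icpt : T -> R) a x y :
  a \in s -> lowest s slope icpt a x -> ~ lowest s slope icpt a y -> y < x ->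
  exists c, [/\ y < c, c <= x & breakpoint s slope icpt c].
Proof.
pose nslope b := - slope b.
have lineN b t : line nslope icpt b t = line slope icpt b (- t).
  by rewrite /line /nslope mulrN mulNr.
have lowestN b t : lowest s nslope icpt b t <-> lowest s slope icpt b (- t).
  by split => h r r_s; move: (h r r_s); rewrite !lineN.
move=> a_s a_x a_y lt_yx.
have [|||c [le_c lt_c [b [b' [b_s b'_s ne_bb' b_c b'_c]]]]] :=
  lowest_breakpoint_right a_s (x := - x) (y := - y) (icpt := icpt) (slope := nslope).
- by rewrite lowestN opprK.
- by rewrite lowestN opprK.
- by rewrite ltrN2.
exists (- c); split; [by rewrite ltrNr | by rewrite lerNl |].
exists b, b'; split => //; rewrite -?lowestN ?opprK //.
by apply: contra ne_bb' => /eqP; rewrite /nslope => ->.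
Qed.

Section WellOrderedClosure.
Local Open Scope order_scope.
Variables (disp : Order.disp_t) (T : orderType disp).
Variables (P : eqType) (ps : seq P) (f : P -> T -> T).
Variables (gen : nat -> T -> Prop) (base : seq T).
Hypothesis f_mono : forall p, {homo f p : x y / x <= y}.
Hypothesis f_infl : forall p y, p \in ps -> y <= f p y.
Hypothesis gen0 : forall x, gen 0 x -> x \in base.
Hypothesis genS : forall k x, gen k.+1 x ->
  exists2 p, p \in ps & exists2 y, gen k y & x = f p y.

Definition in_closure (x : T) : Prop := exists k, gen k x.

Definition below (y x : T) : Prop := in_closure y /\ y < x.

Definition minimal_bad_below (x : T) (g : nat) (y : T) : Prop :=
  [/\ below y x, ~ Acc below y, gen g y &
      forall g' y', below y' x -> ~ Acc below y' -> gen g' y' -> (g <= g')%N].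

Lemma ex_minimal_bad_below x : ~ Acc below x -> exists g y, minimal_bad_below x g y.
Proof.
move=> x_bad.
have [y [y_x y_bad]] : exists y, below y x /\ ~ Acc below y.
  apply: NNPP => no_y; apply: x_bad; constructor => y y_x.
  by apply: NNPP => y_bad; apply: no_y; exists y.
have [k y_k] := y_x.1.
have [g [[y' [y'_x y'_bad y'_g]] g_min]] :=
  @ex_minn_prop (fun g => exists y, [/\ below y x, ~ Acc below y & gen g y])
    (ex_intro _ k (ex_intro _ y (And3 y_x y_bad y_k))).
exists g, y'; split => // g' y'' y''_x y''_bad y''_g'.
by apply: g_min; exists y''.
Qed.

Lemma descent_not_acc (Q : nat -> T -> Prop) :
  (forall k u, Q k u -> in_closure u) ->
  (forall m, exists2 k, (m <= k)%N & exists u, Q k u) ->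
  (forall k k' u u', (k < k')%N -> Q k u -> Q k' u' -> u' < u) ->
  forall k u, Q k u -> ~ Acc below u.
Proof.
move=> Q_cl Q_inf Q_desc k u Qku u_acc; elim: u_acc k Qku => {}u _ IH k Qku.
have [k' lt_kk' [u' Qk'u']] := Q_inf k.+1.
exact: IH (conj (Q_cl _ _ Qk'u') (Q_desc _ _ _ _ lt_kk' Qku Qk'u')) k' Qk'u'.
Qed.

Lemma minimal_bad_sequence_absurd (z : nat -> nat * T) :
  ~ (forall k, minimal_bad_below (z k).2 (z k.+1).1 (z k.+1).2).
Proof.
move=> z_min.
have z_desc k k' : (k < k')%N -> (z k').2 < (z k).2.
  have z_lt i : (z i.+1).2 < (z i).2 by have [[_ lt_z] _ _ _] := z_min i.
  elim: k' => // k' IH; rewrite ltnS leq_eqVlt => /orP [/eqP <-//|/IH].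
  exact: lt_trans (z_lt k').
pose Q p k u := [/\ (0 < (z k.+1).1)%N, gen (z k.+1).1.-1 u & (z k.+1).2 = f p u].
pose origin k (c : T + P) :=
  match c with inl b => (z k.+1).2 = b | inr p => exists u, Q p k u end.
have [c c_in c_inf] : exists2 c, c \in map inl base ++ map inr ps &
    forall m, exists2 k, (m <= k)%N & origin k c.
  apply: infinite_pigeonhole => k; have [_ _ g_z _] := z_min k.
  case e: (z k.+1).1 g_z => [|g] g_z.
    by exists (inl (z k.+1).2); rewrite // mem_cat map_f ?gen0.
  have [p p_ps [u g_u e_u]] := genS g_z.
  by exists (inr p); [rewrite mem_cat map_f ?orbT | exists u; rewrite /Q e].
case: c c_in c_inf => [b _ c_inf|p p_in c_inf].
  have [k1 _ z_b] := c_inf 0%N; have [k2 lt_k12 z_b'] := c_inf k1.+1.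
  by have := z_desc k1.+1 k2.+1 lt_k12; rewrite /= z_b z_b' ltxx.
have p_ps : p \in ps.
  by move: p_in; rewrite mem_cat => /orP [/mapP [? _ //]|/mapP [q q_ps [->]]].
have Q_cl k u : Q p k u -> in_closure u by case=> _ g_u _; exists (z k.+1).1.-1.
have Q_desc k k' u u' : (k < k')%N -> Q p k u -> Q p k' u' -> u' < u.
  move=> lt_kk' [_ _ e] [_ _ e']; rewrite ltNge; apply/negP => /(f_mono p).
  by rewrite -e -e' leNgt z_desc.
have [k _ [u Qku]] := c_inf 0%N.
have u_bad := descent_not_acc Q_cl c_inf Q_desc Qku.
case: Qku => g_pos g_u e_u; have [[_ lt_z] _ _ z_min_k] := z_min k.
have u_below : below u (z k).2.
  by split; [exists (z k.+1).1.-1 | rewrite (le_lt_trans (f_infl u p_ps)) // -e_u].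
move: g_pos (z_min_k _ _ u_below u_bad g_u); case: (z k.+1).1 => // g _.
by rewrite /= ltnn.
Qed.

Theorem below_wf : well_founded below.
Proof.
move=> x0; apply: NNPP => x0_bad.
pose next x := epsilon (inhabits (0%N, x0)) (fun gy => minimal_bad_below x gy.1 gy.2).
have next_spec x : ~ Acc below x -> minimal_bad_below x (next x).1 (next x).2.
  move=> x_bad; have [g [y min_y]] := ex_minimal_bad_below x_bad.
  exact: (epsilon_spec _ (fun gy => minimal_bad_below x gy.1 gy.2) (ex_intro _ (g, y) min_y)).
pose z k := iter k (fun gy => next gy.2) (0%N, x0).
have z_bad k : ~ Acc below (z k).2.
  by elim: k => // k IH; have [_ next_bad _ _] := next_spec _ IH.
by apply: (@minimal_bad_sequence_absurd z) => k; exact: next_spec.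
Qed.

Lemma ex_min_closure (X : T -> Prop) : (exists x, X x) ->
  (forall x, X x -> in_closure x) -> exists2 m, X m & forall y, X y -> m <= y.
Proof.
move=> [x Xx] X_cl; apply: NNPP => no_min.
suff : forall x, Acc below x -> ~ X x by move/(_ x (below_wf x)).
move=> x1; elim=> {}x1 _ IH Xx1; apply: no_min; exists x1 => // y Xy.
by rewrite leNgt; apply/negP => lt_yx; exact: IH y (conj (X_cl y Xy) lt_yx) Xy.
Qed.

End WellOrderedClosure.

Section Mahler.
Variables (K : fieldType) (l n : nat) (a : nat -> {poly K}).
Hypothesis l_ge2 : (2 <= l)%N.
Hypothesis a0_neq0 : a 0%N != 0.

Local Notation PL := (PL n a).
Local Notation lp := (lpow l).
Local Notation piL := (piL l n a).
Local Notation Vi := (Vi l n a).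
Local Notation inV := (inV l n a).
Local Notation slopesL := (slopesL l n a).
Local Notation mu_max := (mu_max l n a).
Local Notation slope := (fun p : nat * nat => lp p.1).
Local Notation icpt := (fun p : nat * nat => (p.2)%:R : rat).
Local Notation Lf := (line slope icpt).
Local Notation lowest := (lowest PL slope icpt).
Local Notation breakpoint := (breakpoint PL slope icpt).

Lemma lpow_gt0 i : 0 < lp i.
Proof. by rewrite ltr0n expn_gt0 (ltn_trans _ l_ge2). Qed.

Lemma lpow_ltn2 i j : (i < j)%N -> 2 * lp i <= lp j.
Proof.
move=> lt_ij; rewrite /lpow -natrM ler_nat (leq_trans (leq_mul l_ge2 (leqnn _))) //.
by rewrite -expnS leq_pexp2l // (ltn_trans _ l_ge2).
Qed.

Lemma lpow_inj : injective lp.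
Proof.
have lt_lpow i j : (i < j)%N -> lp i < lp j.
  by move=> /lpow_ltn2; have := lpow_gt0 i; lra.
move=> i j eq_ij; case: (ltngtP i j) => // /lt_lpow; by rewrite eq_ij ltxx.
Qed.

Lemma mem_PL i j :
  ((i, j) \in PL) = [&& (i <= n)%N, (j < size (a i))%N & (a i)`_j != 0].
Proof.
apply/allpairsPdep/idP => [[i' [j' [i'_n j'_a [-> ->]]]]|/and3P [i_n j_a aij]].
  by move: i'_n j'_a; rewrite !mem_iota mem_filter mem_iota /= ltnS => -> /andP [-> ->].
by exists i, j; rewrite mem_filter !mem_iota /= ltnS aij.
Qed.

Lemma PL_fst_leq p : p \in PL -> (p.1 <= n)%N.
Proof. by case: p => i j; rewrite mem_PL => /and3P []. Qed.

Lemma PL_coef_neq0 i j : (i, j) \in PL -> a i != 0.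
Proof. by rewrite mem_PL => /and3P [_ _]; apply: contraNneq => ->; rewrite coef0. Qed.

Lemma valp_leq i j : (a i)`_j != 0 -> (valp (a i) <= j)%N.
Proof. by move=> aij; rewrite leqNgt; apply: contraL aij => /(before_find 0) ->. Qed.

Lemma valp_PL i : (i <= n)%N -> a i != 0 -> (i, valp (a i)) \in PL.
Proof.
move=> i_n ai_neq0; have has_nz : has (fun c => c != 0) (a i).
  apply/hasP; exists (lead_coef (a i)); last by rewrite lead_coef_eq0.
  by rewrite mem_nth // ltn_predL size_poly_gt0.
by rewrite mem_PL i_n -has_find has_nz (nth_find 0 has_nz).
Qed.

Lemma PL_neq0 : PL != [::].
Proof. by apply: contraTneq (valp_PL (leq0n n) a0_neq0) => ->. Qed.

Lemma pi_val_le q p w : (pi_val l q p <= w) = (q <= Lf p w).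
Proof. by rewrite /pi_val /line ler_pdivrMr ?lpow_gt0 // lerBlDr. Qed.

Lemma pi_val_line p y : pi_val l (Lf p y) p = y.
Proof. by rewrite /pi_val /line addrK mulfK // lt0r_neq0 ?lpow_gt0. Qed.

Lemma piL_ge q p : p \in PL -> pi_val l q p <= piL q.
Proof. by move=> p_PL; apply/le_foldr_max/map_f. Qed.

Lemma piL_attained q : exists2 p, p \in PL & piL q = pi_val l q p.
Proof.
have := foldr_max_in (pi_val l q (head (0%N, 0%N) PL)) [seq pi_val l q p | p <- PL].
rewrite -/(Defs.piL l n a q) inE => /orP [/eqP ->|/mapP [p p_PL ->]]; last by exists p.
by exists (head (0%N, 0%N) PL) => //; case: PL PL_neq0 => // p s _; exact: mem_head.
Qed.

Lemma piL_le_line q p : p \in PL -> q <= Lf p (piL q).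
Proof. by move=> p_PL; rewrite -pi_val_le piL_ge. Qed.

Lemma piL_eq_line q : exists2 p, p \in PL & q = Lf p (piL q).
Proof.
have [p p_PL ->] := piL_attained q; exists p => //.
by rewrite /pi_val /line mulfVK ?lt0r_neq0 ?lpow_gt0 // subrK.
Qed.

Lemma piL_line_ge p y : p \in PL -> y <= piL (Lf p y).
Proof. by move=> p_PL; rewrite -{1}(pi_val_line p y) piL_ge. Qed.

Lemma piL_line_lowest p x : p \in PL -> lowest p x -> piL (Lf p x) = x.
Proof.
move=> p_PL p_x; apply/le_anti; rewrite piL_line_ge // andbT.
by have [p' p'_PL ->] := piL_attained (Lf p x); rewrite pi_val_le p_x.
Qed.

Lemma piL_mono : {homo piL : q q' / q <= q'}.
Proof.
move=> q q' le_qq'; have [p p_PL ->] := piL_attained q.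
by apply: le_trans (piL_ge q' p_PL); rewrite ler_pM2r ?invr_gt0 ?lpow_gt0 ?lerB.
Qed.

Lemma ex_lowest x : exists2 p, p \in PL & lowest p x.
Proof. exact: ex_argmin_seq PL_neq0. Qed.

Lemma mem_ViS k x : x \in Vi k.+1 ->
  exists2 p, p \in PL & exists2 y, y \in Vi k & x = piL (Lf p y).
Proof.
rewrite /= mem_undup => /flattenP [_ /mapP [y y_k ->] /mapP [_ /mapP [p p_PL ->] ->]].
by exists p => //; exists y.
Qed.

Lemma ex_min_V (X : rat -> Prop) : (exists x, X x) -> (forall x, X x -> inV x) ->
  exists2 m, X m & forall y, X y -> m <= y.
Proof.
apply: (@ex_min_closure _ _ _ PL (fun p y => piL (Lf p y)) (fun k x => x \in Vi k) (Vi 0)).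
- by move=> p y y' le_yy'; apply: piL_mono; rewrite lerD2r ler_pM2r ?lpow_gt0.
- by move=> p y; apply: piL_line_ge.
- by [].
- exact: mem_ViS.
Qed.

Lemma mu_max_ge mu : mu \in slopesL -> mu <= mu_max.
Proof. exact: le_foldr_max. Qed.

Lemma inV_ge x : inV x -> - mu_max <= x.
Proof.
case=> k; elim: k x => [|k IH] x; first by move=> /mapP [mu mu_S ->]; rewrite lerN2 mu_max_ge.
by move=> /mem_ViS [p p_PL [y /IH le_y ->]]; exact: le_trans le_y (piL_line_ge _ p_PL).
Qed.

Lemma inV_opp_slope mu : mu \in slopesL -> inV (- mu).
Proof. by exists 0%N; apply: map_f. Qed.

Variable E : seq rat.
Hypothesis E_V : forall e, e \in E -> inV e.
Local Notation Ri := (Ri l n a E).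

Lemma Ri_inV k v : Ri k v -> inV v.
Proof.
case: k => [[/E_V //|/inV_opp_slope]|k [] //]; by rewrite opprK.
Qed.

Lemma Ri_succ k v : Ri k v -> Ri k.+1 v.
Proof.
move=> Rkv; split; first exact: Ri_inV Rkv.
have [p p_PL p_v] := ex_lowest v; exists (Lf p v); first exact: map_f.
by rewrite piL_line_lowest.
Qed.

Lemma Ri_mono k k' v : (k <= k')%N -> Ri k v -> Ri k' v.
Proof.
move=> le_kk' Rkv; rewrite -(subnKC le_kk'); elim: (k' - k)%N => [|m IH].
  by rewrite addn0.
by rewrite addnS; apply: Ri_succ.
Qed.

Lemma lowest_valp p x : p \in PL -> lowest p x -> p.2 = valp (a p.1).
Proof.
case: p => i j p_PL p_x /=; apply/eqP; rewrite eqn_leq; apply/andP; split.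
  have := p_x _ (valp_PL (PL_fst_leq p_PL) (PL_coef_neq0 p_PL)).
  by rewrite /line /= lerD2l ler_nat.
by apply: valp_leq; move: p_PL; rewrite mem_PL => /and3P [].
Qed.

Lemma breakpoint_slope c : breakpoint c -> - c \in slopesL.
Proof.
move=> [p [q [p_PL q_PL ne_pq p_c q_c]]].
wlog lt_pq : p q p_PL q_PL ne_pq p_c q_c / (p.1 < q.1)%N.
  move=> W; case: (ltngtP p.1 q.1) => [|lt_qp|eq_pq]; first exact: W.
    by apply: (W q p) => //; rewrite eq_sym.
  by move: ne_pq; rewrite /= eq_pq eqxx.
case: p q p_PL q_PL ne_pq p_c q_c lt_pq => [i j] [i' j'] p_PL q_PL _ p_c q_c /= lt_ii'.
have idx_PL k : k \in idxL n a -> (k, valp (a k)) \in PL.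
  by rewrite mem_filter mem_iota ltnS => /andP [a_k /andP [_ k_n]]; apply: valp_PL.
have PL_idx k j0 : (k, j0) \in PL -> k \in idxL n a.
  by move=> k_PL; rewrite mem_filter mem_iota ltnS (PL_fst_leq k_PL) (PL_coef_neq0 k_PL).
have ej := lowest_valp p_PL p_c; have ej' := lowest_valp q_PL q_c; simpl in ej, ej'.
have slope_c : slope_of l a i i' = - c.
  have : Lf (i, j) c = Lf (i', j') c by apply/le_anti; rewrite p_c ?q_c.
  have : lp i' - lp i != 0.
    by rewrite subr_eq0; apply: contraTneq lt_ii' => /lpow_inj ->; rewrite ltnn.
  rewrite /line /slope_of /= -ej -ej' => ne0 eq_c.
  by apply: (mulIf ne0); rewrite mulfVK // -/(lpow l i) -/(lpow l i'); lra.
rewrite /slopesL mem_undup; apply/allpairsPdep; exists i, i'; split.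
- exact: PL_idx p_PL.
- rewrite mem_filter lt_ii' slope_c (PL_idx _ _ q_PL) andbT /=.
  by apply/allP => k /idx_PL k_PL; have := p_c _ k_PL; rewrite /line /= -ej; lra.
- by rewrite slope_c.
Qed.

Variables (d : nat) (tau : rat).
Hypothesis d_gt0 : (0 < d)%N.
Hypothesis tauP : is_tau l n a d tau.

Lemma dl_gt0 s : (0 < d * l ^ s)%N.
Proof. by rewrite muln_gt0 d_gt0 expn_gt0 (ltn_trans _ l_ge2). Qed.

Lemma tau_gt0 : 0 < tau.
Proof.
case: tauP.1 => [->|[mu _ [[w [_ [lt_w ->]]] _]]]; last by rewrite subr_gt0.
by rewrite invr_gt0 ltr0n dl_gt0.
Qed.

Lemma tau_le_gap c y : breakpoint c -> inV y -> c < y -> tau <= y - c.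
Proof.
move=> c_brk y_V lt_cy.
have [m [m_V lt_cm] m_min] :=
  @ex_min_V (fun w => inV w /\ c < w) (ex_intro _ y (conj y_V lt_cy)) (fun x h => h.1).
apply: le_trans (_ : m - c <= _); last by rewrite lerD2r m_min.
apply: tauP.2; right; exists (- c); first exact: breakpoint_slope.
rewrite /is_eps opprK; split; first by exists m.
by move=> _ [w [w_V [lt_cw ->]]]; rewrite lerD2r m_min.
Qed.

Definition dl_int (s : nat) (v : rat) : bool := v * (d * l ^ s)%N%:R \is a Num.int.

Lemma dl_int_mono s s' v : (s <= s')%N -> dl_int s v -> dl_int s' v.
Proof.
move=> le_ss' v_s; rewrite /dl_int -(subnKC le_ss') expnD mulnA natrM mulrA.
by rewrite rpredM // rpred_nat.
Qed.

Lemma dl_intB s v w : dl_int s v -> dl_int s w -> dl_int s (v - w).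
Proof. by rewrite /dl_int mulrBl; apply: rpredB. Qed.

Lemma dl_int_line i j i' j' t v w : v * lp i + j%:R = w * lp i' + j'%:R ->
  dl_int (i' + t) w -> dl_int (i + t) v.
Proof.
move=> eq_vw w_int; rewrite /dl_int.
have -> : v * (d * l ^ (i + t))%N%:R =
    w * (d * l ^ (i' + t))%N%:R + (j'%:R - j%:R) * (d * l ^ t)%N%:R.
  apply/eqP; rewrite -subr_eq0.
  have -> : v * (d * l ^ (i + t))%N%:R -
      (w * (d * l ^ (i' + t))%N%:R + (j'%:R - j%:R) * (d * l ^ t)%N%:R) =
      (v * lp i + j%:R - (w * lp i' + j'%:R)) * (d * l ^ t)%N%:R.
    by rewrite /lpow !(expnD, natrM); ring.
  by rewrite eq_vw subrr mul0r.
by rewrite rpredD // rpredM ?rpredB ?rpred_nat.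
Qed.

Lemma tau_le_dl_int x : 0 < x -> dl_int n x -> tau <= x.
Proof.
move=> x_gt0 x_int; apply: le_trans (invr_le_int _ x_int x_gt0).
  by apply: tauP.2; left.
by rewrite ltr0n dl_gt0.
Qed.

Lemma lowest_persists p v w : p \in PL -> lowest p v -> inV w -> v < w ->
  w - v < tau -> lowest p w.
Proof.
move=> p_PL p_v w_V lt_vw small; apply: NNPP => not_p_w.
have [c [le_vc lt_cw c_brk]] := lowest_breakpoint_right p_PL p_v not_p_w lt_vw.
by have := tau_le_gap c_brk w_V lt_cw; lra.
Qed.

(* At [y = 2v - w] the steeper line through [(v, Lf k w)] is already below [k],
   so the envelope breaks in [[y, v]], within [w - v] of [v] or of [w]. *)
Lemma steeper_line_contra v w i0 j0 ik jk :
  (i0, j0) \in PL -> (ik, jk) \in PL -> lowest (ik, jk) v -> inV v -> inV w ->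
  v < w -> w - v < tau -> (ik < i0)%N -> Lf (i0, j0) v = Lf (ik, jk) w -> False.
Proof.
move=> p_PL k_PL k_v v_V w_V lt_vw small lt_ki0 eq_pk.
set y := 2 * v - w; have y_def : y = 2 * v - w by [].
have le_y : Lf (i0, j0) y <= Lf (ik, jk) y.
  have : 0 <= (w - v) * (lp i0 - 2 * lp ik).
    by apply: mulr_ge0; rewrite subr_ge0 ?lpow_ltn2 // ltW.
  by move: eq_pk; rewrite /line /= y_def; nra.
have [c [le_yc le_cv c_brk]] : exists c, [/\ y <= c, c <= v & breakpoint c].
  have [k_y|not_k_y] := classic (lowest (ik, jk) y).
    exists y; split; rewrite ?y_def; [by []|lra|].
    exists (i0, j0), (ik, jk); split => //=.
      by apply: contraTneq lt_ki0 => /lpow_inj ->; rewrite ltnn.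
    by move=> q q_PL; exact: le_trans le_y (k_y q q_PL).
  have [|c [lt_yc le_cv c_brk]] := lowest_breakpoint_left k_PL k_v not_k_y.
    by rewrite y_def; lra.
  by exists c; split => //; exact: ltW.
move: le_cv; rewrite le_eqVlt => /orP [/eqP eq_cv|lt_cv].
  by rewrite -eq_cv in lt_vw; have := tau_le_gap c_brk w_V lt_vw; lra.
by have := tau_le_gap c_brk v_V lt_cv; move: le_yc; rewrite y_def; lra.
Qed.

Lemma small_step v w p s : inV v -> inV w -> p \in PL -> piL (Lf p v) = w ->
  v < w -> w - v < tau -> dl_int s w -> (0 < s)%N /\ dl_int s.-1 v.
Proof.
move=> v_V w_V p_PL pvw lt_vw small w_s.
have no_int_gap : ~ dl_int n (w - v).
  move=> gap_int; suff : tau <= w - v by lra.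
  by apply: tau_le_dl_int gap_int; rewrite subr_gt0.
have [k k_PL k_v] := ex_lowest v.
have k_w := lowest_persists k_PL k_v w_V lt_vw small.
have eq_pk : Lf p v = Lf k w.
  have [p1 p1_PL e1] := piL_eq_line (Lf p v); rewrite pvw in e1.
  by apply/le_anti; rewrite {2}e1 k_w // andbT -pvw piL_le_line.
case: p p_PL {pvw} eq_pk => i0 j0 p_PL; case: k k_PL k_v {k_w} => ik jk k_PL k_v eq_pk.
have i0_n := PL_fst_leq p_PL; have ik_n := PL_fst_leq k_PL; rewrite /= in i0_n ik_n.
case: (ltngtP i0 ik) => [lt_i0k|lt_ki0|eq_i0k].
- have [le_ks|lt_sk] := leqP ik s.
    split; first exact: leq_trans (leq_ltn_trans (leq0n _) lt_i0k) le_ks.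
    have v_int : dl_int (i0 + (s - ik)) v by apply: dl_int_line eq_pk _; rewrite subnKC.
    by apply: dl_int_mono v_int; lia.
  have w_ik : dl_int ik w := dl_int_mono (ltnW lt_sk) w_s.
  have v_i0 : dl_int i0 v by rewrite -[i0]addn0; apply: dl_int_line eq_pk _; rewrite addn0.
  by case: no_int_gap; apply: dl_intB; [exact: dl_int_mono ik_n w_ik|exact: dl_int_mono i0_n v_i0].
- by case: (steeper_line_contra p_PL k_PL k_v v_V w_V lt_vw small lt_ki0 eq_pk).
- case: no_int_gap; subst ik; rewrite /dl_int -(subnKC i0_n) expnD mulnCA natrM mulrA.
  have -> : (w - v) * (l ^ i0)%N%:R = j0%:R - jk%:R.
    by move: eq_pk; rewrite /line /= mulrBl; lra.
  by rewrite rpredM ?rpredB ?rpred_nat.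
Qed.

Lemma big_step v w p s : p \in PL -> piL (Lf p v) = w -> dl_int s w ->
  dl_int (s + n) v.
Proof.
move=> p_PL pvw w_s; have [p1 p1_PL e] := piL_eq_line (Lf p v); rewrite pvw in e.
case: p p_PL {pvw} e => i0 j0 p_PL; case: p1 p1_PL => i1 j1 p1_PL e.
have i0_n := PL_fst_leq p_PL; have i1_n := PL_fst_leq p1_PL; rewrite /= in i0_n i1_n.
rewrite -(subnKC (leq_trans i0_n (leq_addl s n))).
by apply: dl_int_line e _; apply: dl_int_mono w_s; lia.
Qed.

Variables (H : nat) (N : rat).
Hypothesis E_int : forall e, e \in E -> dl_int H e.
Hypothesis E_le : forall e, e \in E -> e <= N.
Hypothesis slopes_int : forall mu, mu \in slopesL -> mu * d%:R \is a Num.int.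
Hypothesis slopes_le : forall mu, mu \in slopesL -> - mu <= N.

(* [b] counts the steps that climb by at least [tau], [m] the others; each of
   the former raises the exponent [s] by at most [n], each of the latter
   lowers it by one. *)
Lemma Ri_chain k v : Ri k v -> exists b m s : nat,
  [/\ Ri (b + m) v, dl_int s v, (m + s <= H + n * b)%N & v + b%:R * tau <= N].
Proof.
elim: k v => [|k IH] v.
  move=> R0v; exists 0%N, 0%N, H; rewrite add0n muln0 addn0 mul0r addr0; split => //.
    case: R0v => [/E_int //|/slopes_int v_int]; apply: (dl_int_mono (leq0n H)).
    by rewrite /dl_int expn0 muln1 -[v]opprK mulNr rpredN.
  by case: R0v => [/E_le //|/slopes_le]; rewrite opprK.
move=> [v_V [_ /mapP [p p_PL ->] Rw]]; set w := piL (Lf p v) in Rw.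
have Rv_of_w k' : Ri k' w -> Ri k'.+1 v.
  by move=> Rk'w; split => //; exists (Lf p v) => //; exact: map_f.
have [b [m [s [Rbm_w w_s le_ms w_N]]]] := IH _ Rw.
have := piL_line_ge v p_PL; rewrite -/w le_eqVlt => /orP [/eqP eq_vw|lt_vw].
  by exists b, m, s; rewrite eq_vw.
have [small|big] := ltP (w - v) tau.
  have [s_gt0 v_s] := small_step v_V (Ri_inV Rw) p_PL erefl lt_vw small w_s.
  exists b, m.+1, s.-1; split => //; last by lra.
    by rewrite addnS; apply: Rv_of_w.
  by rewrite addSn -addnS prednK.
exists b.+1, m, (s + n)%N; split.
- by rewrite addSn; apply: Rv_of_w.
- exact: big_step p_PL erefl w_s.
- by rewrite mulnS; lia.
- by rewrite -addn1 natrD mulrDl mul1r; lra.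
Qed.

End Mahler.

Theorem mainTheorem19 (K : fieldType) (l n : nat) (a : nat -> {poly K})
  (hl : (2 <= l)%N) (hn : (1 <= n)%N) (ha0 : a 0%N != 0) (han : a n != 0)
  (d : nat) (hd : (1 <= d)%N)
  (hdS : forall mu, mu \in slopesL l n a -> mu * d%:R \is a Num.int)
  (tau : rat) (htau : is_tau l n a d tau)
  (E : seq rat) (hEV : forall e, e \in E -> inV l n a e)
  (H : nat) (hH : forall e, e \in E -> e * (d * l ^ H)%N%:R \is a Num.int)
  (N : rat) (hN0 : 0 <= N)
  (hNE : forall e, e \in E -> e <= N)
  (hNS : forall mu, mu \in slopesL l n a -> - mu <= N) :
  let c : int := Num.floor (n.+1%:R * (N + mu_max l n a) / tau) + H%:Z in
  forall i : nat, c <= i%:Z ->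
    forall v : rat, Ri l n a E i v <-> inR l n a E v.
Proof.
move=> c i le_ci v; split => [Riv|[k Rkv]]; first by exists i.
have [b [m [s [Rv _ le_ms v_N]]]] := Ri_chain hl ha0 hEV hd htau hH hNE hdS hNS Rkv.
have v_ge := inV_ge hl (Ri_inV hEV Rv).
have tau_pos := tau_gt0 hl hd htau.
have b_le : (n.+1 * b)%N%:R <= n.+1%:R * (N + mu_max l n a) / tau.
  by rewrite natrM -mulrA ler_pM2l ?ltr0n // ler_pdivlMr //; lra.
have b_floor : (n.+1 * b)%N%:Z <= Num.floor (n.+1%:R * (N + mu_max l n a) / tau).
  by rewrite floor_ge_int.
apply: (Ri_mono hl ha0 hEV _ Rv); rewrite -lez_nat; apply: le_trans le_ci.
by apply: le_trans (lerD b_floor (lexx H%:Z)); rewrite -PoszD lez_nat; lia.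
Qed.
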